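(* Consider the dimensionless Maxwell's equations in free space, $\partial_t\mathbf{E}=\nabla\times\mathbf{H}$, $\partial_t\mathbf{H}=-\nabla\times\mathbf{E}$, in their one-dimensional form ($\partial_t E=\partial_x H$, $\partial_t H=\partial_x E$), two-dimensional $\mathrm{TM}_z$ form ($\partial_t H_x=-\partial_y E_z$, $\partial_t H_y=\partial_x E_z$, $\partial_t E_z=\partial_x H_y-\partial_y H_x$), or three-dimensional form, on the unit cube with periodic boundary conditions, discretized on a uniform rectangular grid with spacings $\Delta x$ (and $\Delta y$, $\Delta z$) and time step $\Delta t$. The BFECC scheme based on the central difference scheme is second order accurate. It is stable in the $l^2$ sense if (1) in the one-dimensional case, $\Delta t\le\sqrt3\,\Delta x$; or (2) in the two-dimensional case, $\Delta t\le \dfrac{\sqrt3}{\sqrt{(1/\Delta x)^2+(1/\Delta y)^2}}$; or (3) in the three-dimensional case, $\Delta t\le \dfrac{\sqrt3}{\sqrt{(1/\Delta x)^2+(1/\Delta y)^2+(1/\Delta z)^2}}$.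
   Context: Write the system as $\partial_t\mathbf{u}=\sum_{m}A_m\partial_{x_m}\mathbf{u}$ with constant matrices $A_m$. The central difference scheme is $\mathbf{U}^{n+1}_{\mathbf{j}}=\mathbf{U}^n_{\mathbf{j}}+\sum_m\frac{\Delta t}{2\Delta x_m}A_m(\mathbf{U}^n_{\mathbf{j}+\mathbf{e}_m}-\mathbf{U}^n_{\mathbf{j}-\mathbf{e}_m})$ (e.g. in 1D: $E^{n+1}_j=E^n_j+\frac{\lambda}{2}(H^n_{j+1}-H^n_{j-1})$, $H^{n+1}_j=H^n_j+\frac\lambda2(E^n_{j+1}-E^n_{j-1})$, $\lambda=\Delta t/\Delta x$). Given a linear scheme $\mathcal{L}$, its backward scheme $\mathcal{L}^*$ is $\mathcal{L}$ applied to the time-reversed system (for Maxwell, equivalently $\Delta t\to-\Delta t$ in the scheme), and the BFECC scheme based on $\mathcal{L}$ performs $\tilde{\mathbf{U}}^{n+1}=\mathcal{L}\mathbf{U}^n$, $\tilde{\mathbf{U}}^n=\mathcal{L}^*\tilde{\mathbf{U}}^{n+1}$, $\mathbf{U}^{n+1}=\mathcal{L}(\mathbf{U}^n+\tfrac12(\mathbf{U}^n-\tilde{\mathbf{U}}^n))$. Accuracy order is in the Fourier sense: with equal mesh sizes $h$ and $\Delta t/h$ fixed, a scheme with Fourier symbol matrix $Q(\mathbf{k})$ is $r$-th order accurate iff $Q(\mathbf{k})=e^{\Delta t P(i\mathbf{k})}+O(|\mathbf{k}h|^{r+1})$ as $h\to0$, where $P(i\mathbf{k})=2\pi i\sum_m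 k_mA_m$ is the symbol of the exact evolution. *)

From HB Require Import structures.
From mathcomp Require Import all_boot all_order all_algebra.
From mathcomp Require Import complex.
From mathcomp Require Import reals trigo.

Set Implicit Arguments.
Unset Strict Implicit.
Unset Printing Implicit Defensive.

Import Order.TTheory GRing.Theory Num.Theory.
Local Open Scope ring_scope.
Local Open Scope complex_scope.

Section Defs.
Variable R : realType.

Definition expi (t : R) : R[i] := cos t +i* sin t.

(* Fourier symbol of the central difference scheme for
   d_t u = sum_m A_m d_{x_m} u, for the Fourier mode e^{2 pi i k.x}:
   Q(k) = I + sum_m dt/(2 dx_m) (e^{2 pi i k_m dx_m} - e^{-2 pi i k_m dx_m}) A_m *)
Definition cd_symbol (d p : nat) (A : 'I_d -> 'M[R[i]]_p.+1)
    (dt : R) (dx k : 'I_d -> R) : 'M[R[i]]_p.+1 :=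
  1 + \sum_(m < d)
        (((dt / (2 * dx m))%:C) *
          (expi (2 * pi * k m * dx m) - expi (- (2 * pi * k m * dx m))))
          *: A m.

(* Backward scheme L^*: L applied to the time-reversed system
   d_t u = - sum_m A_m d_{x_m} u. *)
Definition cd_backward_symbol (d p : nat) (A : 'I_d -> 'M[R[i]]_p.+1)
    (dt : R) (dx k : 'I_d -> R) : 'M[R[i]]_p.+1 :=
  cd_symbol (fun m => - A m) dt dx k.

(* Symbol of the BFECC scheme based on a linear scheme with symbol L and
   backward symbol Ls:  U^{n+1} = L (U^n + 1/2 (U^n - Ls L U^n)). *)
Definition bfecc_symbol (p : nat) (L Ls : 'M[R[i]]_p.+1) : 'M[R[i]]_p.+1 :=
  L *m (1 + 2^-1 *: (1 - Ls *m L)).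

Definition bfecc_cd_symbol (d p : nat) (A : 'I_d -> 'M[R[i]]_p.+1)
    (dt : R) (dx k : 'I_d -> R) : 'M[R[i]]_p.+1 :=
  bfecc_symbol (cd_symbol A dt dx k) (cd_backward_symbol A dt dx k).

Definition exact_exponent (d p : nat) (A : 'I_d -> 'M[R[i]]_p.+1)
    (dt : R) (k : 'I_d -> R) : 'M[R[i]]_p.+1 :=
  (dt%:C * (2 * pi)%:C * 'i) *: \sum_(m < d) (k m)%:C *: A m.

Definition is_mxexp (p : nat) (X E : 'M[R[i]]_p.+1) : Prop :=
  forall (i j : 'I_p.+1) (eps : R), 0 < eps ->
  exists N : nat, forall n : nat, (N <= n)%N ->
    `| (\sum_(l < n) ((l`!%:R)^-1 *: X ^+ l)) i j - E i j | < eps%:C.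

Definition kvec_norm (d : nat) (k : 'I_d -> R) : R :=
  Num.sqrt (\sum_(m < d) k m ^+ 2).

(* r-th order accuracy in the Fourier sense: with equal mesh sizes h and
   dt/h = lam fixed, Q(k) = e^{dt P(ik)} + O(|k h|^{r+1}) as h -> 0. *)
Definition fourier_accurate (d p : nat) (A : 'I_d -> 'M[R[i]]_p.+1)
    (Q : R -> ('I_d -> R) -> ('I_d -> R) -> 'M[R[i]]_p.+1) (r : nat) : Prop :=
  forall lam : R, 0 < lam -> forall k : 'I_d -> R,
  exists C : R, exists delta : R, 0 < delta /\
  forall h : R, 0 < h -> h < delta ->
  forall E : 'M[R[i]]_p.+1, is_mxexp (exact_exponent A (lam * h) k) E ->
  forall i j : 'I_p.+1,
    `| (Q (lam * h) (fun _ => h) k - E) i j | <= (C * (h * kvec_norm k) ^+ r.+1)%:C.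

Definition l2norm (p : nat) (v : 'cV[R[i]]_p) : R :=
  Num.sqrt (\sum_(i < p) (complex.Re (v i 0) ^+ 2 + complex.Im (v i 0) ^+ 2)).

(* l^2 stability (von Neumann): the powers of the amplification matrix are
   uniformly bounded in the l^2 operator norm, over all wave numbers k and
   all time levels n. *)
Definition l2_stable (d p : nat) (G : ('I_d -> R) -> 'M[R[i]]_p.+1) : Prop :=
  exists K : R, forall (k : 'I_d -> R) (n : nat) (v : 'cV[R[i]]_p.+1),
    l2norm (G k ^+ n *m v) <= K * l2norm v.

Definition levi (a b c : nat) : R[i] :=
  if [&& a == 0, b == 1 & c == 2]%N || [&& a == 1, b == 2 & c == 0]%N
     || [&& a == 2, b == 0 & c == 1]%N then 1
  else if [&& a == 0, b == 2 & c == 1]%N || [&& a == 2, b == 1 & c == 0]%N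
     || [&& a == 1, b == 0 & c == 2]%N then -1
  else 0.

(* 1D: u = (E, H),  E_t = H_x,  H_t = E_x *)
Definition maxwell1 (m : 'I_1) : 'M[R[i]]_2 :=
  \matrix_(i < 2, j < 2) (if i != j then 1 else 0).

(* 2D TM_z: u = (H_x, H_y, E_z),
   (H_x)_t = - (E_z)_y, (H_y)_t = (E_z)_x, (E_z)_t = (H_y)_x - (H_x)_y *)
Definition maxwell2 (m : 'I_2) : 'M[R[i]]_3 :=
  \matrix_(i < 3, j < 3)
    (if (m == 0 :> nat) then
       (if ((i == 1 :> nat) && (j == 2 :> nat)) || ((i == 2 :> nat) && (j == 1 :> nat))
        then 1 else 0)
     else
       (if ((i == 0 :> nat) && (j == 2 :> nat)) || ((i == 2 :> nat) && (j == 0 :> nat))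
        then -1 else 0)).

(* 3D: u = (E_1, E_2, E_3, H_1, H_2, H_3), E_t = curl H, H_t = - curl E,
   with (curl F)_a = sum_{b,c} levi a b c d_b F_c. *)
Definition maxwell3 (m : 'I_3) : 'M[R[i]]_6 :=
  \matrix_(i < 6, j < 6)
    (if ((i < 3) && (3 <= j))%N then levi i m (j - 3)
     else if ((3 <= i) && (j < 3))%N then - levi (i - 3) m j
     else 0).

End Defs.

From mathcomp Require Import all_boot all_order all_algebra.
From mathcomp Require Import complex.
From mathcomp Require Import reals trigo.
From mathcomp Require Import ring lra.
From mathcomp Require Import topology normedtype derive.
Import Order.TTheory GRing.Theory Num.Theory.
Import numFieldNormedType.Exports.
Local Open Scope ring_scope.
Local Open Scope complex_scope.
Set Implicit Arguments. Unset Strict Implicit.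
Import ComplexField.Normc.

(* The central-difference symbol is [1 + i B] and its backward symbol [1 - i B], where
   [B = sum_m (dt/dx_m) sin(2 pi k_m dx_m) A_m]; hence the BFECC amplification matrix is
   [G = (1 + i B)(1 - B^2/2)].
   Stability: for Maxwell the [A_m] are real symmetric and [|B w|^2 <= |c|^2 |w|^2] with
   [c_m = (dt/dx_m) sin(...)], so the CFL condition gives [|B w|^2 <= 3 |w|^2].  Splitting
   [v] into real and imaginary parts, [|G v|^2] is a sum of terms [|M a|^2 + |B M a|^2] with
   [M = 1 - B^2/2], and each of these is at most [|a|^2]; so every power of [G] is an
   [l^2] contraction.
   Accuracy: with [dt = lam h], [B = B' + O(h^3)] where [i B'] is the exact exponent
   [dt P(ik)], and [G = 1 + i B - B^2/2 + O(B^3)] agrees with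
   [exp (i B') = 1 + i B' - B'^2/2 + O(B'^3)] up to [O(|k h|^3)]; all estimates are made in
   the entrywise l^1 norm of matrices, which is submultiplicative. *)

Section TrigBounds.
Variable R : realType.
Implicit Types x : R.

Lemma ler_norm_sin x : `|sin x| <= `|x|.
Proof.
wlog x0 : x / 0 <= x.
  by move=> H; have [/H //|/ltW] := leP 0 x; rewrite -oppr_ge0 => /H; rewrite sinN !normrN.
have [] := @MVT_segment R sin cos 0 x x0 (fun t _ => is_derive_sin t).
  exact/continuous_subspaceT/continuous_sin.
move=> c _; rewrite sin0 !subr0 => ->.
by rewrite normrM ler_piMl ?cos_max.
Qed.

Lemma one_sub_cos_bound x : 0 <= 1 - cos x <= x ^+ 2 / 2.
Proof.
have cosE : cos x = 1 - 2 * sin (x / 2) ^+ 2.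
  by rewrite {1}(splitr x) cosD -!expr2 cos2sin2; ring.
have : sin (x / 2) ^+ 2 <= (x / 2) ^+ 2.
  rewrite -real_normK ?num_real // -[X in _ <= X]real_normK ?num_real //.
  by rewrite lerXn2r ?nnegrE // ler_norm_sin.
rewrite cosE; have := sqr_ge0 (sin (x / 2)); lra.
Qed.

Lemma ler_norm_sin_sub x : `|sin x - x| <= `|x| ^+ 3 / 2.
Proof.
wlog x0 : x / 0 <= x.
  move=> H; have [/H //|/ltW] := leP 0 x; rewrite -oppr_ge0 => /H.
  by rewrite sinN -opprD !normrN.
have dsub (t : R) : is_derive t (1 : R) (fun t => t - sin t) (1 - cos t).
  exact: is_deriveB (is_derive_sin t).
have [] := @MVT_segment R _ _ 0 x x0 (fun t _ => dsub t).
  by apply/continuous_subspaceT => t; apply: continuousB => //; exact: continuous_sin.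
move=> c; rewrite in_itv /= => /andP[c0 cx]; rewrite sin0 !subr0 => sub_sin.
have /andP[cos_ge0 cos_le] := one_sub_cos_bound c.
have c2x2 : c ^+ 2 <= x ^+ 2 by rewrite lerXn2r ?nnegrE.
rewrite -normrN opprB sub_sin ger0_norm ?mulr_ge0 // ger0_norm //.
have := ler_wpM2r x0 cos_le; have := ler_wpM2r x0 c2x2; nra.
Qed.
End TrigBounds.

Lemma ler_sum_term (R : numDomainType) (I : finType) (F : I -> R) i :
  (forall j, 0 <= F j) -> F i <= \sum_j F j.
Proof. by move=> F0; rewrite (bigD1 i) //= lerDl sumr_ge0. Qed.

Section MatrixL1Norm.
Variable R : rcfType.

Lemma normc_ge0 (z : R[i]) : 0 <= normc z.
Proof. by case: z => a b; exact: sqrtr_ge0. Qed.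

Lemma normc_real (x : R) : normc x%:C = `|x|.
Proof. by rewrite /= expr0n addr0 sqrtr_sqr. Qed.

Lemma normc_i : normc ('i : R[i]) = 1.
Proof. by rewrite /= expr0n add0r expr1n sqrtr1. Qed.

Lemma normc_half : normc (2^-1 : R[i]) = 2^-1.
Proof.
by rewrite -(rmorph_nat (real_complex R)) -fmorphV normc_real ger0_norm // invr_ge0.
Qed.

Lemma ler_normc_sum I (r : seq I) (P : pred I) (F : I -> R[i]) :
  normc (\sum_(i <- r | P i) F i) <= \sum_(i <- r | P i) normc (F i).
Proof.
elim/big_rec2: _ => [|i y1 y2 _ IH]; first by rewrite normc0.
by rewrite (le_trans (le_normcD _ _)) // lerD2l.
Qed.

Lemma normrcE (z : R[i]) : `|z| = (normc z)%:C.
Proof. by case: z => a b; rewrite normc_def. Qed.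

Definition mxnorm1 m n (M : 'M[R[i]]_(m, n)) : R := \sum_i \sum_j normc (M i j).

Lemma mxnorm1_ge0 m n (M : 'M[R[i]]_(m, n)) : 0 <= mxnorm1 M.
Proof. by do 2![apply: sumr_ge0 => ? _]; exact: normc_ge0. Qed.

Lemma ler_normc_mxnorm1 m n (M : 'M[R[i]]_(m, n)) i j : normc (M i j) <= mxnorm1 M.
Proof.
have row_ge0 i' : 0 <= \sum_j normc (M i' j) by apply: sumr_ge0 => *; exact: normc_ge0.
apply: le_trans (@ler_sum_term _ _ (fun j' => normc (M i j')) j _) _ => [j'|].
  exact: normc_ge0.
exact: (@ler_sum_term _ _ (fun i' => \sum_j normc (M i' j)) i row_ge0).
Qed.

Lemma ler_mxnorm1D m n (A B : 'M[R[i]]_(m, n)) : mxnorm1 (A + B) <= mxnorm1 A + mxnorm1 B.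
Proof.
rewrite /mxnorm1 -big_split ler_sum // => i _; rewrite -big_split ler_sum // => j _.
by rewrite mxE le_normcD.
Qed.

Lemma mxnorm1N m n (A : 'M[R[i]]_(m, n)) : mxnorm1 (- A) = mxnorm1 A.
Proof. by apply: eq_bigr => i _; apply: eq_bigr => j _; rewrite mxE normcN. Qed.

Lemma ler_mxnorm1B m n (A B : 'M[R[i]]_(m, n)) : mxnorm1 (A - B) <= mxnorm1 A + mxnorm1 B.
Proof. by rewrite -(mxnorm1N B) ler_mxnorm1D. Qed.

Lemma mxnorm1Z m n c (A : 'M[R[i]]_(m, n)) : mxnorm1 (c *: A) = normc c * mxnorm1 A.
Proof.
rewrite /mxnorm1 mulr_sumr; apply: eq_bigr => i _; rewrite mulr_sumr.
by apply: eq_bigr => j _; rewrite mxE normcM.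
Qed.

Lemma ler_mxnorm1_sum m n I (r : seq I) (P : pred I) (F : I -> 'M[R[i]]_(m, n)) :
  mxnorm1 (\sum_(i <- r | P i) F i) <= \sum_(i <- r | P i) mxnorm1 (F i).
Proof.
elim/big_rec2: _ => [|i y1 y2 _ IH].
  by rewrite /mxnorm1 big1 // => i _; rewrite big1 // => j _; rewrite mxE normc0.
by rewrite (le_trans (ler_mxnorm1D _ _)) // lerD2l.
Qed.

Lemma ler_mxnorm1M m n q (A : 'M[R[i]]_(m, n)) (B : 'M[R[i]]_(n, q)) :
  mxnorm1 (A *m B) <= mxnorm1 A * mxnorm1 B.
Proof.
rewrite /mxnorm1 mulr_suml ler_sum // => i _.
apply: (@le_trans _ _ (\sum_j \sum_k normc (A i k) * normc (B k j))).
  apply: ler_sum => j _; rewrite mxE (le_trans (ler_normc_sum _ _ _)) //.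
  by apply: ler_sum => k _; rewrite normcM.
rewrite exchange_big /= mulr_suml ler_sum // => k _.
rewrite -mulr_sumr ler_wpM2l ?normc_ge0 //.
apply: (@ler_sum_term _ _ (fun k' => \sum_j normc (B k' j))) => k'.
by apply: sumr_ge0 => j _; exact: normc_ge0.
Qed.

Lemma ler_mxnorm1X p (M : 'M[R[i]]_p.+1) l : (0 < l)%N -> mxnorm1 (M ^+ l) <= mxnorm1 M ^+ l.
Proof.
case: l => // l _; elim: l => [|l IH]; first by rewrite !expr1.
rewrite exprS [X in _ <= X]exprS -mulmxE (le_trans (ler_mxnorm1M _ _)) //.
by rewrite ler_wpM2l ?mxnorm1_ge0.
Qed.
End MatrixL1Norm.

Section ExpTaylor.
Variable R : realType.

Lemma ler_geometric_tail (r : R) n : 0 <= r -> r <= 1 / 2 ->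
  \sum_(3 <= l < n) r ^+ l <= 2 * r ^+ 3.
Proof.
move=> r0 r12; rewrite -{1}[3%N]add0n big_addn.
under eq_bigr do rewrite exprD.
rewrite -mulr_suml big_mkord ler_wpM2r ?exprn_ge0 //.
have geom := subrX1 r (n - 3); have := exprn_ge0 (n - 3) r0.
have : 0 <= \sum_(l < n - 3) r ^+ l by apply: sumr_ge0 => *; exact: exprn_ge0.
nra.
Qed.

Lemma normc_inv_fact l : normc ((l`!%:R : R[i])^-1) <= 1.
Proof.
rewrite -(rmorph_nat (real_complex R)) -fmorphV normc_real ger0_norm ?invr_ge0 //.
by rewrite invf_le1 ?ler1n ?ltr0n fact_gt0.
Qed.

Lemma mxexp_taylor2 p (X E : 'M[R[i]]_p.+1) r : is_mxexp X E ->
  mxnorm1 X <= r -> r <= 1 / 2 ->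
  forall i j, normc ((1 + X + 2^-1 *: (X *m X) - E) i j) <= 2 * r ^+ 3.
Proof.
move=> XE Xr r12 i j; have r0 := le_trans (mxnorm1_ge0 X) Xr.
pose S n := \sum_(l < n) ((l`!%:R)^-1 *: X ^+ l).
have S3 : S 3%N = 1 + X + 2^-1 *: (X *m X).
  by rewrite /S !big_ord_recl big_ord0 /= !factS fact0 /= invr1 !scale1r expr2 addr0 addrA.
have tail n : (3 <= n)%N -> mxnorm1 (S n - S 3%N) <= 2 * r ^+ 3.
  move=> n3; rewrite /S -!(big_mkord xpredT (fun l => (l`!%:R)^-1 *: X ^+ l)).
  rewrite (big_cat_nat (isT : (0 <= 3)%N) n3) /= addrC addrK.
  rewrite (le_trans (ler_mxnorm1_sum _ _ _)) // (le_trans _ (ler_geometric_tail n r0 r12)) //.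
  apply: ler_sum_nat => l /andP[l3 _]; rewrite mxnorm1Z.
  rewrite (le_trans (ler_wpM2r (mxnorm1_ge0 _) (normc_inv_fact l))) // mul1r.
  rewrite (le_trans (ler_mxnorm1X _ _)) //; first exact: leq_trans l3.
  by rewrite lerXn2r ?nnegrE ?mxnorm1_ge0.
apply/ler_addgt0Pr => e e0; have [N SN] := XE i j e e0.
set N' := maxn N 3.
have := SN N' (leq_maxl _ _); rewrite normrcE ltcR => SN_E.
have SN_S3 := le_trans (ler_normc_mxnorm1 _ i j) (tail _ (leq_maxr N 3)).
rewrite -S3.
have -> : (S 3%N - E) i j = - (S N' - S 3%N) i j + (S N' i j - E i j).
  by rewrite !mxE opprB addrA subrK.
by rewrite (le_trans (le_normcD _ _)) // normcN lerD // ltW.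
Qed.
End ExpTaylor.

Section BfeccCentralSymbol.
Variables (R : realType) (d p : nat).
Implicit Types (A : 'I_d -> 'M[R[i]]_p.+1) (dt : R) (dx k : 'I_d -> R).

Lemma expi_subN (t : R) : expi t - expi (- t) = 'i * (2 * sin t)%:C.
Proof.
rewrite /expi cosN sinN; simpc.
by apply/eqP; rewrite eq_complex /=; apply/andP; split; apply/eqP; ring.
Qed.

Definition symbol_mx A (c : 'I_d -> R) : 'M[R[i]]_p.+1 := \sum_(m < d) (c m)%:C *: A m.

Definition cd_sine_mx A dt dx k : 'M[R[i]]_p.+1 :=
  symbol_mx A (fun m => dt / dx m * sin (2 * pi * k m * dx m)).

Definition bfecc_amp (B : 'M[R[i]]_p.+1) : 'M[R[i]]_p.+1 :=
  (1 + 'i *: B) *m (1 - 2^-1 *: (B *m B)).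

Lemma cd_symbolE A dt dx k : cd_symbol A dt dx k = 1 + 'i *: cd_sine_mx A dt dx k.
Proof.
rewrite /cd_symbol /cd_sine_mx /symbol_mx scaler_sumr; congr (1 + _); apply: eq_bigr => m _.
rewrite scalerA expi_subN mulrCA -rmorphM; congr (('i * _%:C) *: _).
by rewrite invfM mulrCA !mulrA [2 * dt]mulrC mulfK ?pnatr_eq0.
Qed.

Lemma cd_backward_symbolE A dt dx k :
  cd_backward_symbol A dt dx k = 1 - 'i *: cd_sine_mx A dt dx k.
Proof.
rewrite /cd_backward_symbol cd_symbolE /cd_sine_mx /symbol_mx -scalerN -sumrN.
by congr (1 + _ *: _); apply: eq_bigr => m _; rewrite scalerN.
Qed.

Lemma bfecc_symbol_conj (B : 'M[R[i]]_p.+1) :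
  bfecc_symbol (1 + 'i *: B) (1 - 'i *: B) = bfecc_amp B.
Proof.
rewrite /bfecc_symbol /bfecc_amp !mulmxE; congr (_ * _).
rewrite mulrDr mulr1 mulrBl mul1r -scalerAl -scalerAr scalerA -expr2 sqr_i scaleN1r.
by rewrite opprK addrA subrK opprD addNKr scalerN.
Qed.

Lemma bfecc_cd_symbolE A dt dx k :
  bfecc_cd_symbol A dt dx k = bfecc_amp (cd_sine_mx A dt dx k).
Proof.
by rewrite /bfecc_cd_symbol cd_symbolE cd_backward_symbolE bfecc_symbol_conj.
Qed.
End BfeccCentralSymbol.

Section RealSymmetricContraction.
Variables (R : realFieldType) (n : nat).
Implicit Types (x y z : 'cV[R]_n) (B : 'M[R]_n).

Definition vdot x y := \sum_i x i 0 * y i 0.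
Definition vnorm2 x := vdot x x.

Lemma vdotC x y : vdot x y = vdot y x.
Proof. by apply: eq_bigr => i _; rewrite mulrC. Qed.

Lemma vdotDr x y z : vdot x (y + z) = vdot x y + vdot x z.
Proof. by rewrite /vdot -big_split; apply: eq_bigr => i _; rewrite mxE mulrDr. Qed.

Lemma vdotDl x y z : vdot (y + z) x = vdot y x + vdot z x.
Proof. by rewrite vdotC vdotDr !(vdotC x). Qed.

Lemma vdotZr x y c : vdot x (c *: y) = c * vdot x y.
Proof. by rewrite /vdot mulr_sumr; apply: eq_bigr => i _; rewrite mxE mulrCA. Qed.

Lemma vdotZl x y c : vdot (c *: y) x = c * vdot y x.
Proof. by rewrite vdotC vdotZr vdotC. Qed.

Lemma vdotNr x y : vdot x (- y) = - vdot x y.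
Proof. by rewrite -scaleN1r vdotZr mulN1r. Qed.

Lemma vdotNl x y : vdot (- y) x = - vdot y x.
Proof. by rewrite vdotC vdotNr vdotC. Qed.

Lemma vnorm2_ge0 x : 0 <= vnorm2 x.
Proof. by apply: sumr_ge0 => i _; rewrite -expr2 sqr_ge0. Qed.

Lemma vnorm2_symbol_mulmx d (c : 'I_d -> R) (A : 'I_d -> 'M[R]_n) w :
  vnorm2 ((\sum_m c m *: A m) *m w) =
  \sum_i (\sum_j (\sum_m c m * A m i j) * w j 0) ^+ 2.
Proof.
apply: eq_bigr => i _; rewrite -expr2 mxE; congr (_ ^+ 2); apply: eq_bigr => j _.
by rewrite summxE; congr (_ * _); apply: eq_bigr => m _; rewrite mxE.
Qed.

Lemma vdot_sym_mulmx B x y : B^T = B -> vdot x (B *m y) = vdot (B *m x) y.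
Proof.
move=> sB; rewrite /vdot.
under eq_bigr do rewrite mxE mulr_sumr.
under [RHS]eq_bigr do rewrite mxE mulr_suml.
rewrite exchange_big /=; apply: eq_bigr => i _; apply: eq_bigr => j _.
by rewrite -{1}sB mxE mulrCA mulrA.
Qed.

(* With [M = 1 - B^2/2] and [a_k = B^k a]:
   [|M a|^2 + |B M a|^2 = |a|^2 - (3 |a_2|^2 - |a_3|^2) / 4]. *)
Lemma bfecc_real_contraction B a : B^T = B ->
  (forall w, vnorm2 (B *m w) <= 3 * vnorm2 w) ->
  vnorm2 ((1%:M - 2^-1 *: (B *m B)) *m a) +
  vnorm2 (B *m ((1%:M - 2^-1 *: (B *m B)) *m a)) <= vnorm2 a.
Proof.
move=> sB HB; set M := 1%:M - _.
set a1 := B *m a; set a2 := B *m a1; set a3 := B *m a2.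
have -> : M *m a = a - 2^-1 *: a2 by rewrite mulmxBl mul1mx -scalemxAl -mulmxA.
rewrite mulmxBr -scalemxAr -/a1 -/a3.
have d1 : vdot a a2 = vnorm2 a1 by rewrite vdot_sym_mulmx.
have d2 : vdot a1 a3 = vnorm2 a2 by rewrite vdot_sym_mulmx.
rewrite /vnorm2 !(vdotDl, vdotDr, vdotNl, vdotNr, vdotZl, vdotZr).
rewrite (vdotC a2 a) (vdotC a3 a1) d1 d2.
have := HB a2; have := vnorm2_ge0 a2; rewrite /vnorm2; lra.
Qed.
End RealSymmetricContraction.

Section ComplexLift.
Variable R : realType.
Local Notation toC := (real_complex R).
Local Notation Re := (@complex.Re R).
Local Notation Im := (@complex.Im R).

Lemma l2normE n (v : 'cV[R[i]]_n) :
  l2norm v = Num.sqrt (vnorm2 (map_mx Re v) + vnorm2 (map_mx Im v)).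
Proof.
rewrite /l2norm /vnorm2 /vdot -big_split; congr Num.sqrt.
by apply: eq_bigr => i _; rewrite !mxE !expr2.
Qed.

Lemma map_Re_mulmx n (X Y : 'M[R]_n) (v : 'cV[R[i]]_n) :
  map_mx Re ((map_mx toC X + 'i *: map_mx toC Y) *m v) =
  X *m map_mx Re v - Y *m map_mx Im v.
Proof.
apply/matrixP => i j; rewrite !mxE raddf_sum -sumrB; apply: eq_bigr => l _.
by rewrite !mxE; case: (v l j) => a b /=; ring.
Qed.

Lemma map_Im_mulmx n (X Y : 'M[R]_n) (v : 'cV[R[i]]_n) :
  map_mx Im ((map_mx toC X + 'i *: map_mx toC Y) *m v) =
  X *m map_mx Im v + Y *m map_mx Re v.
Proof.
apply/matrixP => i j; rewrite !mxE raddf_sum -big_split; apply: eq_bigr => l _.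
by rewrite !mxE; case: (v l j) => a b /=; ring.
Qed.

Variable p : nat.

Lemma bfecc_amp_real (B : 'M[R]_p.+1) :
  bfecc_amp (map_mx toC B) = map_mx toC (1%:M - 2^-1 *: (B *m B))
    + 'i *: map_mx toC (B *m (1%:M - 2^-1 *: (B *m B))).
Proof.
rewrite /bfecc_amp map_mxM map_mxB map_mxZ map_mx1 map_mxM fmorphV rmorph_nat.
set Bc := map_mx _ B.
by rewrite -[1%:M]/(1 : 'M[R[i]]_p.+1) !mulmxE mulrDl mul1r -scalerAl.
Qed.

(* The cross terms cancel because [vdot x (B *m y) = vdot (B *m x) y]. *)
Lemma l2norm_bfecc_amp_le (B : 'M[R]_p.+1) v : B^T = B ->
  (forall w, vnorm2 (B *m w) <= 3 * vnorm2 w) ->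
  l2norm (bfecc_amp (map_mx toC B) *m v) <= l2norm v.
Proof.
move=> sB HB; rewrite bfecc_amp_real !l2normE map_Re_mulmx map_Im_mulmx -!mulmxA.
rewrite ler_sqrt ?addr_ge0 ?vnorm2_ge0 //.
set M := 1%:M - _; set a := map_mx Re v; set b := map_mx Im v.
have := bfecc_real_contraction a sB HB; have := bfecc_real_contraction b sB HB.
rewrite -/M; set a' := M *m a; set b' := M *m b => Hb Ha.
have cross : vdot a' (B *m b') = vdot b' (B *m a') by rewrite vdot_sym_mulmx // vdotC.
move: Ha Hb; rewrite /vnorm2 !(vdotDl, vdotDr, vdotNl, vdotNr).
rewrite (vdotC (B *m b') a') (vdotC (B *m a') b') cross; lra.
Qed.

Lemma l2_stable_contraction d (G : ('I_d -> R) -> 'M[R[i]]_p.+1) :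
  (forall k v, l2norm (G k *m v) <= l2norm v) -> l2_stable G.
Proof.
move=> HG; exists 1 => k n v; rewrite mul1r.
elim: n v => [|n IH] v; first by rewrite expr0 mul1mx.
by rewrite exprS -mulmxE -mulmxA (le_trans (HG _ _)).
Qed.
End ComplexLift.

Section BfeccCentralStability.
Variables (R : realType) (d p : nat).
Local Notation toC := (real_complex R).

Lemma sqr_cd_coef_le (dt dxm t : R) : (dt / dxm * sin t) ^+ 2 <= dt ^+ 2 * (1 / dxm) ^+ 2.
Proof.
have sin2_le1 : sin t ^+ 2 <= 1 by have := cos2Dsin2 t; have := sqr_ge0 (cos t); lra.
rewrite exprMn (le_trans (ler_wpM2l (sqr_ge0 _) sin2_le1)) //.
by rewrite mulr1 div1r exprMn.
Qed.

Lemma bfecc_cd_l2_stable (A : 'I_d -> 'M[R[i]]_p.+1) (AR : 'I_d -> 'M[R]_p.+1) dt dx :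
  (forall m, A m = map_mx toC (AR m)) -> (forall m, (AR m)^T = AR m) ->
  (forall (c : 'I_d -> R) w,
     vnorm2 ((\sum_m c m *: AR m) *m w) <= (\sum_m c m ^+ 2) * vnorm2 w) ->
  dt ^+ 2 * \sum_m (1 / dx m) ^+ 2 <= 3 ->
  l2_stable (bfecc_cd_symbol A dt dx).
Proof.
move=> AE AR_sym AR_bound cfl; apply: l2_stable_contraction => k v.
pose c m := dt / dx m * sin (2 * pi * k m * dx m).
have -> : bfecc_cd_symbol A dt dx k = bfecc_amp (map_mx toC (\sum_m c m *: AR m)).
  rewrite bfecc_cd_symbolE /cd_sine_mx /symbol_mx map_mx_sum; congr bfecc_amp.
  by apply: eq_bigr => m _; rewrite map_mxZ AE.
apply: l2norm_bfecc_amp_le.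
  by rewrite linear_sum; apply: eq_bigr => m _; rewrite linearZ /= AR_sym.
move=> w; rewrite (le_trans (AR_bound c w)) // ler_wpM2r ?vnorm2_ge0 //.
by rewrite (le_trans _ cfl) // mulr_sumr ler_sum // => m _; exact: sqr_cd_coef_le.
Qed.
End BfeccCentralStability.

Section CflConditions.
Variable R : rcfType.

Lemma cfl_sqrt_le (dt S : R) : 0 <= dt -> 0 < S ->
  dt <= Num.sqrt 3 / Num.sqrt S -> dt ^+ 2 * S <= 3.
Proof.
move=> dt0 S0 cfl.
have -> : 3 = (Num.sqrt 3 / Num.sqrt S) ^+ 2 * S.
  by rewrite expr_div_n !sqr_sqrtr ?ler0n ?ltW // divfK // gt_eqF.
by rewrite ler_pM2r // lerXn2r ?nnegrE // (le_trans dt0).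
Qed.

Lemma cfl1_le (dt dx : R) : 0 <= dt -> 0 < dx -> dt <= Num.sqrt 3 * dx ->
  dt ^+ 2 * (1 / dx) ^+ 2 <= 3.
Proof.
move=> dt0 dx0 cfl; apply: cfl_sqrt_le => //; first by rewrite exprn_gt0 ?divr_gt0.
rewrite sqrtr_sqr ger0_norm ?invf_div ?divr1 //.
by rewrite divr_ge0 // ltW.
Qed.
End CflConditions.

Section BfeccCentralAccuracy.
Variables (R : realType) (d p : nat) (A : 'I_d -> 'M[R[i]]_p.+1).
Implicit Types X Y : 'M[R[i]]_p.+1.

Definition expi_taylor2 Y := 1 + 'i *: Y - 2^-1 *: (Y *m Y).

Lemma bfecc_ampE X : bfecc_amp X = expi_taylor2 X - ('i * 2^-1) *: (X *m (X *m X)).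
Proof.
rewrite /bfecc_amp /expi_taylor2 !mulmxE mulrDl mul1r mulrBr mulr1.
by rewrite -scalerAl -scalerAr scalerA addrA (addrAC 1).
Qed.

Lemma expi_taylor2B X Y : expi_taylor2 X - expi_taylor2 Y =
  'i *: (X - Y) - 2^-1 *: (X *m (X - Y) + (X - Y) *m Y).
Proof.
rewrite /expi_taylor2 mulmxBr mulmxBl addrA subrK !scalerBr !opprD.
by rewrite [LHS]addrACA [X in X + _]addrACA subrr add0r.
Qed.

Lemma mxexp_expi_taylor2 Y E r : is_mxexp ('i *: Y) E -> mxnorm1 Y <= r -> r <= 1 / 2 ->
  forall i j, normc ((expi_taylor2 Y - E) i j) <= 2 * r ^+ 3.
Proof.
move=> YE Yr r12 i j.
have iYr : mxnorm1 ('i *: Y) <= r by rewrite mxnorm1Z normc_i mul1r.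
have iY2 : ('i *: Y) *m ('i *: Y) = - (Y *m Y).
  by rewrite -scalemxAl -scalemxAr scalerA -expr2 sqr_i scaleN1r.
by have := mxexp_taylor2 YE iYr r12 i j; rewrite iY2 scalerN.
Qed.

Lemma ler_bfecc_amp_taylor X Y s t :
  mxnorm1 X <= s -> mxnorm1 Y <= s -> mxnorm1 (X - Y) <= t ->
  mxnorm1 (bfecc_amp X - expi_taylor2 Y) <= t + s * t + s ^+ 3 / 2.
Proof.
move=> Xs Ys XYt; rewrite bfecc_ampE addrAC expi_taylor2B; set D := X - Y.
have n1 : mxnorm1 ('i *: D) <= t by rewrite mxnorm1Z normc_i mul1r.
have n2 : mxnorm1 (2^-1 *: (X *m D + D *m Y)) <= s * t.
  rewrite mxnorm1Z normc_half.
  have := ler_mxnorm1D (X *m D) (D *m Y).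
  have := le_trans (ler_mxnorm1M X D) (ler_pM (mxnorm1_ge0 _) (mxnorm1_ge0 _) Xs XYt).
  have := le_trans (ler_mxnorm1M D Y) (ler_pM (mxnorm1_ge0 _) (mxnorm1_ge0 _) XYt Ys).
  lra.
have n3 : mxnorm1 (('i / 2) *: (X *m (X *m X))) <= s ^+ 3 / 2.
  rewrite mxnorm1Z normcM normc_i normc_half mul1r mulrC ler_wpM2r ?invr_ge0 //.
  have X2 := le_trans (ler_mxnorm1M X X) (ler_pM (mxnorm1_ge0 _) (mxnorm1_ge0 _) Xs Xs).
  have := le_trans (ler_mxnorm1M X (X *m X)) (ler_pM (mxnorm1_ge0 _) (mxnorm1_ge0 _) Xs X2).
  by rewrite -expr2 -exprS.
apply: le_trans (ler_mxnorm1B _ _) (lerD _ n3).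
exact: le_trans (ler_mxnorm1B _ _) (lerD n1 n2).
Qed.
Lemma ler_bfecc_amp_expi X Y E s t : is_mxexp ('i *: Y) E ->
  mxnorm1 X <= s -> mxnorm1 Y <= s -> mxnorm1 (X - Y) <= t -> s <= 1 / 2 ->
  forall i j, normc ((bfecc_amp X - E) i j) <= 3 / 2 * t + 5 / 2 * s ^+ 3.
Proof.
move=> YE Xs Ys XYt s12 i j; have t0 := le_trans (mxnorm1_ge0 _) XYt.
have amp_err := le_trans (ler_normc_mxnorm1 _ i j) (ler_bfecc_amp_taylor Xs Ys XYt).
have exp_err := mxexp_expi_taylor2 YE Ys s12 i j.
have -> : bfecc_amp X - E = (bfecc_amp X - expi_taylor2 Y) + (expi_taylor2 Y - E).
  by rewrite addrA subrK.
rewrite mxE; apply: le_trans (le_normcD _ _) (le_trans (lerD amp_err exp_err) _).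
have := ler_wpM2r t0 s12; lra.
Qed.

Lemma symbol_mxB (c c' : 'I_d -> R) :
  symbol_mx A c - symbol_mx A c' = symbol_mx A (fun m => c m - c' m).
Proof. by rewrite -sumrB; apply: eq_bigr => m _; rewrite -scalerBl -rmorphB. Qed.

Lemma ler_mxnorm1_symbol (c : 'I_d -> R) r : (forall m, `|c m| <= r) ->
  mxnorm1 (symbol_mx A c) <= r * \sum_m mxnorm1 (A m).
Proof.
move=> cr; rewrite (le_trans (ler_mxnorm1_sum _ _ _)) // mulr_sumr ler_sum // => m _.
by rewrite mxnorm1Z normc_real ler_wpM2r ?mxnorm1_ge0.
Qed.

Lemma ler_norm_phase (k : 'I_d -> R) h m : 0 <= h ->
  `|2 * pi * k m * h| <= 2 * pi * (h * kvec_norm k).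
Proof.
move=> h0; rewrite -mulrA normrM ger0_norm ?mulr_ge0 ?pi_ge0 // ler_wpM2l ?mulr_ge0 ?pi_ge0 //.
rewrite normrM (ger0_norm h0) mulrC ler_wpM2l // -sqrtr_sqr ler_sqrt ?sumr_ge0 //.
  by apply: (@ler_sum_term _ _ (fun l => k l ^+ 2)) => l; exact: sqr_ge0.
by move=> l _; exact: sqr_ge0.
Qed.

Lemma bfecc_cd_fourier_accurate : fourier_accurate A (bfecc_cd_symbol A) 2.
Proof.
move=> lam lam0 k; set SA := \sum_m mxnorm1 (A m).
have SA0 : 0 <= SA by apply: sumr_ge0 => m _; exact: mxnorm1_ge0.
set a := lam * (2 * pi) * SA; set b := lam * (2 * pi) ^+ 3 * SA / 2.
have a0 : 0 <= a by rewrite /a !mulr_ge0 ?pi_ge0 // ltW.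
have kap0 : 0 <= kvec_norm k := sqrtr_ge0 _.
have delta0 : 0 < 1 + 2 * a * kvec_norm k by have := mulr_ge0 a0 kap0; lra.
exists (3 / 2 * b + 5 / 2 * a ^+ 3), (1 + 2 * a * kvec_norm k)^-1.
split=> [|h h0 h_delta E hE i j]; first by rewrite invr_gt0.
set u := h * kvec_norm k; pose th m := 2 * pi * k m * h.
have au : a * u <= 1 / 2.
  by have := h_delta; rewrite -(ltr_pM2r delta0) mulVf ?gt_eqF // /u; lra.
have th_le m : `|th m| <= 2 * pi * u by apply: ler_norm_phase; exact: ltW.
have SAu : a * u = lam * (2 * pi * u) * SA by rewrite /a; ring.
have sine_le : mxnorm1 (symbol_mx A (fun m => lam * sin (th m))) <= a * u.
  rewrite SAu; apply: ler_mxnorm1_symbol => m.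
  rewrite normrM (gtr0_norm lam0) ler_pM2l //.
  exact: le_trans (ler_norm_sin _) (th_le m).
have phase_le : mxnorm1 (symbol_mx A (fun m => lam * th m)) <= a * u.
  by rewrite SAu; apply: ler_mxnorm1_symbol => m; rewrite normrM (gtr0_norm lam0) ler_pM2l.
have sub_le : mxnorm1 (symbol_mx A (fun m => lam * sin (th m)) -
                        symbol_mx A (fun m => lam * th m)) <= b * u ^+ 3.
  rewrite symbol_mxB (_ : b * u ^+ 3 = lam * ((2 * pi * u) ^+ 3 / 2) * SA); last first.
    by rewrite /b; ring.
  apply: ler_mxnorm1_symbol => m; rewrite -mulrBr normrM (gtr0_norm lam0) ler_pM2l //.
  rewrite (le_trans (ler_norm_sin_sub _)) // ler_pM2r ?invr_gt0 // lerXn2r ?nnegrE //.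
  exact: le_trans (th_le m).
have EX : exact_exponent A (lam * h) k = 'i *: symbol_mx A (fun m => lam * th m).
  rewrite /exact_exponent /symbol_mx !scaler_sumr; apply: eq_bigr => m _.
  by rewrite !scalerA; congr (_ *: _); rewrite /th !rmorphM; ring.
have BsE : cd_sine_mx A (lam * h) (fun=> h) k = symbol_mx A (fun m => lam * sin (th m)).
  by apply: eq_bigr => m _; rewrite mulfK ?gt_eqF.
rewrite EX in hE; rewrite bfecc_cd_symbolE BsE normrcE lecR.
rewrite (_ : _ * u ^+ 3 = 3 / 2 * (b * u ^+ 3) + 5 / 2 * (a * u) ^+ 3); last first.
  by clearbody a b u; rewrite exprMn; ring.
exact: ler_bfecc_amp_expi hE sine_le phase_le sub_le au i j.
Qed.
End BfeccCentralAccuracy.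

(* The formulas of [maxwell1], [maxwell2], [maxwell3] and [levi] over an arbitrary ring, so
   that the Maxwell matrices can be handled as real matrices. *)
Section MaxwellMatrices.
Variable T : pzRingType.

Definition maxwell1_mx (m : 'I_1) : 'M[T]_2 :=
  \matrix_(i < 2, j < 2) (if i != j then 1 else 0).

Definition maxwell2_mx (m : 'I_2) : 'M[T]_3 :=
  \matrix_(i < 3, j < 3)
    (if (m == 0 :> nat) then
       (if ((i == 1 :> nat) && (j == 2 :> nat)) || ((i == 2 :> nat) && (j == 1 :> nat))
        then 1 else 0)
     else
       (if ((i == 0 :> nat) && (j == 2 :> nat)) || ((i == 2 :> nat) && (j == 0 :> nat))
        then -1 else 0)).

Definition levi_sign (a b c : nat) : T :=
  if [&& a == 0, b == 1 & c == 2]%N || [&& a == 1, b == 2 & c == 0]%N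
     || [&& a == 2, b == 0 & c == 1]%N then 1
  else if [&& a == 0, b == 2 & c == 1]%N || [&& a == 2, b == 1 & c == 0]%N
     || [&& a == 1, b == 0 & c == 2]%N then -1
  else 0.

Definition maxwell3_mx (m : 'I_3) : 'M[T]_6 :=
  \matrix_(i < 6, j < 6)
    (if ((i < 3) && (3 <= j))%N then levi_sign i m (j - 3)
     else if ((3 <= i) && (j < 3))%N then - levi_sign (i - 3) m j
     else 0).

Lemma maxwell1_mx_sym m : (maxwell1_mx m)^T = maxwell1_mx m.
Proof. by apply/matrixP => i j; rewrite !mxE eq_sym. Qed.

Lemma maxwell2_mx_sym m : (maxwell2_mx m)^T = maxwell2_mx m.
Proof.
apply/matrixP => i j; rewrite !mxE.
by case: m => [[|[|//]] ?]; case: i => [[|[|[|//]]] ?]; case: j => [[|[|[|//]]] ?].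
Qed.

Lemma maxwell3_mx_sym m : (maxwell3_mx m)^T = maxwell3_mx m.
Proof.
apply/matrixP => i j; rewrite !mxE.
case: m => [[|[|[|//]]] ?]; case: i => [[|[|[|[|[|[|//]]]]]] ?];
  case: j => [[|[|[|[|[|[|//]]]]]] ?];
  by rewrite /levi_sign /= ?oppr0 ?opprK.
Qed.
End MaxwellMatrices.

Section MaxwellRealForm.
Variable R : realType.
Local Notation toC := (real_complex R).

Lemma maxwell1_real m : maxwell1 R m = map_mx toC (maxwell1_mx R m).
Proof. by apply/matrixP => i j; rewrite !mxE; case: ifP => _; rewrite ?rmorph1 ?rmorph0. Qed.

Lemma maxwell2_real m : maxwell2 R m = map_mx toC (maxwell2_mx R m).
Proof.
apply/matrixP => i j; rewrite !mxE.
by do ?case: ifP => _; rewrite ?rmorphN ?rmorph1 ?rmorph0.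
Qed.

Lemma levi_real a b c : levi R a b c = toC (levi_sign R a b c).
Proof. by rewrite /levi /levi_sign; do ?case: ifP => _; rewrite ?rmorphN ?rmorph1 ?rmorph0. Qed.

Lemma maxwell3_real m : maxwell3 R m = map_mx toC (maxwell3_mx R m).
Proof.
apply/matrixP => i j; rewrite !mxE.
by do ?case: ifP => _; rewrite ?rmorphN ?levi_real ?rmorph0.
Qed.
End MaxwellRealForm.

Section MaxwellSymbolBound.
Variable R : realFieldType.
Local Notation i1 := (lift ord0 ord0).
Local Notation i2 := (lift ord0 i1).
Local Notation i3 := (lift ord0 i2).
Local Notation i4 := (lift ord0 i3).
Local Notation i5 := (lift ord0 i4).

Lemma maxwell1_symbol_bound (c : 'I_1 -> R) w :
  vnorm2 ((\sum_m c m *: maxwell1_mx R m) *m w) <= (\sum_m c m ^+ 2) * vnorm2 w.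
Proof.
rewrite vnorm2_symbol_mulmx /vnorm2 /vdot.
under eq_bigr do under eq_bigr do under eq_bigr do rewrite mxE.
by rewrite !big_ord_recl !big_ord0 /=; lra.
Qed.

Lemma maxwell2_symbol_bound (c : 'I_2 -> R) w :
  vnorm2 ((\sum_m c m *: maxwell2_mx R m) *m w) <= (\sum_m c m ^+ 2) * vnorm2 w.
Proof.
rewrite vnorm2_symbol_mulmx /vnorm2 /vdot.
under eq_bigr do under eq_bigr do under eq_bigr do rewrite mxE.
rewrite !big_ord_recl !big_ord0 /=.
have := sqr_ge0 (c ord0 * w ord0 0 + c i1 * w i1 0); lra.
Qed.

(* [|c x H|^2 + |c x E|^2 = |c|^2 (|E|^2 + |H|^2) - (c.E)^2 - (c.H)^2] for [w = (E, H)]. *)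
Lemma maxwell3_symbol_bound (c : 'I_3 -> R) w :
  vnorm2 ((\sum_m c m *: maxwell3_mx R m) *m w) <= (\sum_m c m ^+ 2) * vnorm2 w.
Proof.
rewrite vnorm2_symbol_mulmx /vnorm2 /vdot.
under eq_bigr do under eq_bigr do under eq_bigr do rewrite mxE.
rewrite !big_ord_recl !big_ord0 /levi_sign /=.
have := sqr_ge0 (c ord0 * w ord0 0 + c i1 * w i1 0 + c i2 * w i2 0).
have := sqr_ge0 (c ord0 * w i3 0 + c i1 * w i4 0 + c i2 * w i5 0).
lra.
Qed.
End MaxwellSymbolBound.

Section MaxwellStability.
Variable R : realType.

Lemma maxwell1_l2_stable (dt : R) (dx : 'I_1 -> R) : 0 < dt -> (forall m, 0 < dx m) ->
  dt <= Num.sqrt 3 * dx ord0 -> l2_stable (bfecc_cd_symbol (@maxwell1 R) dt dx).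
Proof.
move=> dt0 dx0 cfl.
apply: (bfecc_cd_l2_stable (maxwell1_real R) (@maxwell1_mx_sym R) (@maxwell1_symbol_bound R)).
by rewrite big_ord1; apply: cfl1_le (ltW dt0) (dx0 _) cfl.
Qed.

Lemma maxwell2_l2_stable (dt : R) (dx : 'I_2 -> R) : 0 < dt -> (forall m, 0 < dx m) ->
  dt <= Num.sqrt 3 / Num.sqrt ((1 / dx 0) ^+ 2 + (1 / dx 1) ^+ 2) ->
  l2_stable (bfecc_cd_symbol (@maxwell2 R) dt dx).
Proof.
move=> dt0 dx0 cfl.
apply: (bfecc_cd_l2_stable (maxwell2_real R) (@maxwell2_mx_sym R) (@maxwell2_symbol_bound R)).
rewrite !big_ord_recl big_ord0 addr0 (_ : lift ord0 ord0 = 1); last exact: val_inj.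
by rewrite (cfl_sqrt_le (ltW dt0)) // addr_gt0 // exprn_gt0 // divr_gt0.
Qed.

Lemma maxwell3_l2_stable (dt : R) (dx : 'I_3 -> R) : 0 < dt -> (forall m, 0 < dx m) ->
  dt <= Num.sqrt 3 / Num.sqrt ((1 / dx 0) ^+ 2 + (1 / dx 1) ^+ 2 + (1 / dx 2) ^+ 2) ->
  l2_stable (bfecc_cd_symbol (@maxwell3 R) dt dx).
Proof.
move=> dt0 dx0 cfl.
apply: (bfecc_cd_l2_stable (maxwell3_real R) (@maxwell3_mx_sym R) (@maxwell3_symbol_bound R)).
rewrite !big_ord_recl big_ord0 addr0 addrA (_ : lift ord0 ord0 = 1); last exact: val_inj.
rewrite (_ : lift ord0 (lift ord0 ord0) = 2); last exact: val_inj.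
by rewrite (cfl_sqrt_le (ltW dt0)) // !addr_gt0 // exprn_gt0 // divr_gt0.
Qed.
End MaxwellStability.

Theorem theorem3p1 (R : realType) :
  (* (1) one-dimensional case *)
  (fourier_accurate (@maxwell1 R) (@bfecc_cd_symbol R 1 1 (@maxwell1 R)) 2 /\
   forall (dt : R) (dx : 'I_1 -> R), 0 < dt -> (forall m, 0 < dx m) ->
     dt <= Num.sqrt 3 * dx ord0 ->
     l2_stable (bfecc_cd_symbol (@maxwell1 R) dt dx)) /\
  (* (2) two-dimensional TM_z case *)
  (fourier_accurate (@maxwell2 R) (@bfecc_cd_symbol R 2 2 (@maxwell2 R)) 2 /\
   forall (dt : R) (dx : 'I_2 -> R), 0 < dt -> (forall m, 0 < dx m) ->
     dt <= Num.sqrt 3 / Num.sqrt ((1 / dx 0) ^+ 2 + (1 / dx 1) ^+ 2) ->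
     l2_stable (bfecc_cd_symbol (@maxwell2 R) dt dx)) /\
  (* (3) three-dimensional case *)
  (fourier_accurate (@maxwell3 R) (@bfecc_cd_symbol R 3 5 (@maxwell3 R)) 2 /\
   forall (dt : R) (dx : 'I_3 -> R), 0 < dt -> (forall m, 0 < dx m) ->
     dt <= Num.sqrt 3 / Num.sqrt ((1 / dx 0) ^+ 2 + (1 / dx 1) ^+ 2 + (1 / dx 2) ^+ 2) ->
     l2_stable (bfecc_cd_symbol (@maxwell3 R) dt dx)).
Proof.
split; first by split; [exact: bfecc_cd_fourier_accurate | exact: maxwell1_l2_stable].
split; first by split; [exact: bfecc_cd_fourier_accurate | exact: maxwell2_l2_stable].
by split; [exact: bfecc_cd_fourier_accurate | exact: maxwell3_l2_stable].
Qed.
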